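(* Let $\mathbb{F}$ be a field of characteristic $2$. The voltage with respect to $\ell$ of any cycle of length four in $\widetilde H_3(\mathbb{F})$ lies in the $\mathbb{F}_2$-subspace $W^{(2)}\oplus\langle U\rangle$ of $S_2(W)$.
   Context: Let $V=\mathbb{F}^4$, $V^*$ its dual. $\widetilde H_3(\mathbb{F})$ is the graph whose vertices are tensors $v\otimes f\in V\otimes V^*$ with $f(v)\neq0$, with $v\otimes f\perp w\otimes g$ iff $f(w)=g(v)=0$. Let $W=\bigwedge^2V$, fix an isomorphism $\chi:\bigwedge^4V\to\mathbb{F}$, identify $\bigwedge^2V^*$ with $(\bigwedge^2V)^*$ via $(f_1\wedge f_2)(v_1\wedge v_2)=f_1(v_1)f_2(v_2)-f_1(v_2)f_2(v_1)$, let $\psi:\bigwedge^2V\to\bigwedge^2V^*$ be $\psi(\hat w)(\hat v)=\chi(\hat v\wedge\hat w)$ and $\phi=\psi^{-1}$. $S_2(W)$ is the symmetric square of $W$ (product $ab$, $a^2=aa$), and $W^{(2)}=\langle\hat w^2:\hat w\in W\rangle$ (a $6$-dimensional $\mathbb{F}$-subspace). $U=(w\wedge x)(y\wedge z)+(w\wedge y)(z\wedge x)+(w\wedge z)(x\wedge y)$ for any $w,x,y,z\in V$ with $\chi(w\wedge x\wedge y\wedge z)=1$ (independent of the choice); $\langle U\rangle$ denotes its $\mathbb{F}_2$-span. $\ell$ assigns to the dart from $v_1\otimes h_1$ to $v_2\otimes h_2$ the element $h_1(v_1)^{-1}h_2(v_2)^{-1}(v_1\wedge v_2)\,\phi(h_1\wedge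 h_2)$ of $S_2(W)$; the voltage of a cycle is the sum of the voltages of its darts. *)

From HB Require Import structures.
From mathcomp Require Import all_boot all_order all_algebra.
From mathcomp Require Import mpoly.
Set Implicit Arguments. Unset Strict Implicit. Unset Printing Implicit Defensive.
Import GRing.Theory.
Local Open Scope ring_scope.

(* V = F^4 and V^* = F^4 are both modelled by row vectors 'rV[F]_4;
   f(v) is the standard pairing. *)
Definition ev (F : fieldType) (f v : 'rV[F]_4) : F := \sum_(i < 4) f 0 i * v 0 i.

(* The basis e_a /\ e_b (a < b) of W = /\^2 V is indexed by 'I_6 in the order
   01,02,03,12,13,23; pfst/psnd give a and b. *)
Definition pfst (k : 'I_6) : 'I_4 := inord (nth 0%N [:: 0; 0; 0; 1; 1; 2]%N k).
Definition psnd (k : 'I_6) : 'I_4 := inord (nth 0%N [:: 1; 2; 3; 2; 3; 3]%N k).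

Definition wedge2 (F : fieldType) (v w : 'rV[F]_4) : 'rV[F]_6 :=
  \row_k (v 0 (pfst k) * w 0 (psnd k) - v 0 (psnd k) * w 0 (pfst k)).

Definition ebas (F : fieldType) (a : 'I_4) : 'rV[F]_4 := delta_mx 0 a.

(* /\^4 V is identified with F via e_0/\e_1/\e_2/\e_3 |-> 1, i.e. by det;
   any isomorphism chi : /\^4 V -> F is then c * det4 for some c != 0. *)
Definition det4 (F : fieldType) (a b c d : 'rV[F]_4) : F :=
  \det (\matrix_(i < 4, j < 4) ([:: a; b; c; d]`_i) 0 j).

Definition wedge22 (F : fieldType) (vh wh : 'rV[F]_6) : F :=
  \sum_(k < 6) \sum_(l < 6) vh 0 k * wh 0 l *
     det4 (ebas F (pfst k)) (ebas F (psnd k)) (ebas F (pfst l)) (ebas F (psnd l)).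

Definition chi22 (F : fieldType) (c : F) (vh wh : 'rV[F]_6) : F := c * wedge22 vh wh.

Definition ebasW (F : fieldType) (k : 'I_6) : 'rV[F]_6 := delta_mx 0 k.

(* Matrix of psi : W -> W^* : the column of psi(wh) (values on the basis of W)
   is  Psi *m wh^T, since psi(wh)(vh) = chi(vh /\ wh). *)
Definition Psi (F : fieldType) (c : F) : 'M[F]_6 :=
  \matrix_(k < 6, l < 6) chi22 c (ebasW F k) (ebasW F l).

(* The functional h1 /\ h2 on W (via the identification of the paper),
   given by its values on the basis e_a /\ e_b. *)
Definition hval (F : fieldType) (h1 h2 : 'rV[F]_4) : 'cV[F]_6 :=
  \col_k (ev h1 (ebas F (pfst k)) * ev h2 (ebas F (psnd k))
          - ev h1 (ebas F (psnd k)) * ev h2 (ebas F (pfst k))).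

Definition phi (F : fieldType) (c : F) (h1 h2 : 'rV[F]_4) : 'rV[F]_6 :=
  (invmx (Psi c) *m hval h1 h2)^T.

(* S(W) is the polynomial algebra on the basis of W; S_2(W) its degree-2
   part. lin embeds W = S_1(W). *)
Definition lin (F : fieldType) (w : 'rV[F]_6) : {mpoly F[6]} :=
  \sum_(k < 6) w 0 k *: 'X_k.

Definition ell (F : fieldType) (c : F) (v1 h1 v2 h2 : 'rV[F]_4) : {mpoly F[6]} :=
  ((ev h1 v1)^-1 * (ev h2 v2)^-1) *: (lin (wedge2 v1 v2) * lin (phi c h1 h2)).

(* The tensor v (x) f in V (x) V^* ~ 4x4 matrices. *)
Definition tensor (F : fieldType) (v f : 'rV[F]_4) : 'M[F]_4 := v^T *m f.

Definition adj (F : fieldType) (v f w g : 'rV[F]_4) : Prop :=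
  ev f w = 0 /\ ev g v = 0.

Definition inW2 (F : fieldType) (x : {mpoly F[6]}) : Prop :=
  exists s : seq (F * 'rV[F]_6), x = \sum_(p <- s) p.1 *: (lin p.2) ^+ 2.

Definition Uel (F : fieldType) (w x y z : 'rV[F]_4) : {mpoly F[6]} :=
  lin (wedge2 w x) * lin (wedge2 y z) + lin (wedge2 w y) * lin (wedge2 z x)
  + lin (wedge2 w z) * lin (wedge2 x y).

(* Replace each vertex v (x) h by the rank-one projection P = v h / h(v).
   Identifying W^* with W by psi, which is c times the Hodge star H, the voltage
   of a dart P -> Q is the quadratic form on W with coefficient matrix
   c^-1 (P ^ Q) H, where P ^ Q is the cross term of the second compound
   /\^2(P + Q).  Summing around the 4-cycle P0 P1 P2 P3 gives the form of (A, B)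
   with A = P0 + P2 and B = P1 + P3.  Adjacency gives AB = BA = 0, and in
   characteristic 2 also tr A = tr B = 0.  For 4 x 4 matrices the antisymmetric
   part of (A ^ B) H is expressed through AB + BA, tr AB, tr A and tr B, so the
   coefficient matrix is symmetric; in characteristic 2 the off-diagonal terms of
   a symmetric quadratic form cancel in pairs.  Hence the voltage is a
   combination of squares of basis vectors: it lies in W^(2) itself, with no
   U-component. *)

From HB Require Import structures.
From mathcomp Require Import all_boot all_order all_algebra.
From mathcomp Require Import mpoly.
From mathcomp Require Import ring.
Set Implicit Arguments. Unset Strict Implicit. Unset Printing Implicit Defensive.
Import GRing.Theory.
Local Open Scope ring_scope.

Lemma ord6_ind (P : 'I_6 -> Prop) :
  P (@Ordinal 6 0 isT) -> P (@Ordinal 6 1 isT) -> P (@Ordinal 6 2 isT) ->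
  P (@Ordinal 6 3 isT) -> P (@Ordinal 6 4 isT) -> P (@Ordinal 6 5 isT) ->
  forall k, P k.
Proof.
move=> P0 P1 P2 P3 P4 P5 [[|[|[|[|[|[|//]]]]]] lt_k6];
  by rewrite (bool_irrelevance lt_k6 isT).
Qed.

Lemma sum_ord4 (R : nmodType) (G : 'I_4 -> R) :
  \sum_(i < 4) G i =
  G (@Ordinal 4 0 isT) + G (@Ordinal 4 1 isT) + G (@Ordinal 4 2 isT)
  + G (@Ordinal 4 3 isT).
Proof. by rewrite !big_ord_recl big_ord0 addr0 !addrA; repeat f_equal; apply/val_inj. Qed.

Lemma sum_ord6 (R : nmodType) (G : 'I_6 -> R) :
  \sum_(i < 6) G i =
  G (@Ordinal 6 0 isT) + G (@Ordinal 6 1 isT) + G (@Ordinal 6 2 isT)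
  + G (@Ordinal 6 3 isT) + G (@Ordinal 6 4 isT) + G (@Ordinal 6 5 isT).
Proof. by rewrite !big_ord_recl big_ord0 addr0 !addrA; repeat f_equal; apply/val_inj. Qed.

(* [pfst] and [psnd] in a form that [simpl] evaluates on closed ordinals;
   [compl6] sends the index of e_a /\ e_b to that of the complementary pair. *)
Definition pfst_ord (k : 'I_6) : 'I_4 :=
  match val k with
  | 0 | 1 | 2 => @Ordinal 4 0 isT | 3 | 4 => @Ordinal 4 1 isT | _ => @Ordinal 4 2 isT
  end%N.
Definition psnd_ord (k : 'I_6) : 'I_4 :=
  match val k with
  | 0 => @Ordinal 4 1 isT | 1 | 3 => @Ordinal 4 2 isT | _ => @Ordinal 4 3 isT
  end%N.
Definition compl6 (k : 'I_6) : 'I_6 :=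
  match val k with
  | 0 => @Ordinal 6 5 isT | 1 => @Ordinal 6 4 isT | 2 => @Ordinal 6 3 isT
  | 3 => @Ordinal 6 2 isT | 4 => @Ordinal 6 1 isT | _ => @Ordinal 6 0 isT
  end%N.

Lemma pfstE k : pfst k = pfst_ord k.
Proof. by elim/ord6_ind: k; apply/val_inj; rewrite /pfst /= inordK. Qed.

Lemma psndE k : psnd k = psnd_ord k.
Proof. by elim/ord6_ind: k; apply/val_inj; rewrite /psnd /= inordK. Qed.

(* The Hodge star e_ab |-> s e_cd of W, with e_ab /\ s e_cd = e_0123. *)
Definition hodge_sign (R : pzRingType) (k : 'I_6) : R :=
  if (val k == 1)%N || (val k == 4)%N then -1 else 1.

Definition hodge_mx (R : pzRingType) : 'M[R]_6 :=
  \matrix_(k, l) (if l == compl6 k then hodge_sign R k else 0).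

Lemma hodge_mx_tr (R : pzRingType) : (hodge_mx R)^T = hodge_mx R.
Proof.
apply/matrixP => k l; rewrite !mxE.
by elim/ord6_ind: k; elim/ord6_ind: l; rewrite /hodge_sign.
Qed.

Lemma hodge_mxK (R : comPzRingType) : hodge_mx R *m hodge_mx R = 1%:M.
Proof.
apply/matrixP => k l; rewrite !mxE sum_ord6.
by elim/ord6_ind: k; elim/ord6_ind: l; rewrite /= !mxE /hodge_sign /=; ring.
Qed.

Lemma mulmx_hodgeE (R : pzRingType) m (M : 'M[R]_(m, 6)) i l :
  (M *m hodge_mx R) i l = M i (compl6 l) * hodge_sign R l.
Proof.
rewrite !mxE sum_ord6.
by elim/ord6_ind: l; rewrite /= !mxE /hodge_sign /= ?(mulr0, addr0, add0r).
Qed.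

Lemma det_mx4 (R : comNzRingType) (f : nat -> nat -> R) :
  \det (\matrix_(i < 4, j < 4) f i j) =
    f 0 0 * f 1 1 * f 2 2 * f 3 3 - f 0 0 * f 1 1 * f 2 3 * f 3 2
  - f 0 0 * f 1 2 * f 2 1 * f 3 3 + f 0 0 * f 1 2 * f 2 3 * f 3 1
  + f 0 0 * f 1 3 * f 2 1 * f 3 2 - f 0 0 * f 1 3 * f 2 2 * f 3 1
  - f 0 1 * f 1 0 * f 2 2 * f 3 3 + f 0 1 * f 1 0 * f 2 3 * f 3 2
  + f 0 1 * f 1 2 * f 2 0 * f 3 3 - f 0 1 * f 1 2 * f 2 3 * f 3 0
  - f 0 1 * f 1 3 * f 2 0 * f 3 2 + f 0 1 * f 1 3 * f 2 2 * f 3 0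
  + f 0 2 * f 1 0 * f 2 1 * f 3 3 - f 0 2 * f 1 0 * f 2 3 * f 3 1
  - f 0 2 * f 1 1 * f 2 0 * f 3 3 + f 0 2 * f 1 1 * f 2 3 * f 3 0
  + f 0 2 * f 1 3 * f 2 0 * f 3 1 - f 0 2 * f 1 3 * f 2 1 * f 3 0
  - f 0 3 * f 1 0 * f 2 1 * f 3 2 + f 0 3 * f 1 0 * f 2 2 * f 3 1
  + f 0 3 * f 1 1 * f 2 0 * f 3 2 - f 0 3 * f 1 1 * f 2 2 * f 3 0
  - f 0 3 * f 1 2 * f 2 0 * f 3 1 + f 0 3 * f 1 2 * f 2 1 * f 3 0.
Proof.
rewrite (expand_det_row _ (@Ordinal 4 0 isT)) sum_ord4 /cofactor.
rewrite !(expand_det_row _ (@Ordinal 3 0 isT)) !big_ord_recl !big_ord0 /cofactor.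
rewrite !(expand_det_row _ (@Ordinal 2 0 isT)) !big_ord_recl !big_ord0 /cofactor.
by rewrite !det_mx11 ?mxE /bump /=; ring.
Qed.

(* The cross term of the second compound matrix:
   /\^2 (X + Y) = /\^2 X + wedge2_mx X Y + /\^2 Y. *)
Definition wedge2_mx (R : pzRingType) (X Y : 'M[R]_4) : 'M[R]_6 :=
  \matrix_(k, l)
    (X (pfst k) (pfst l) * Y (psnd k) (psnd l) - X (pfst k) (psnd l) * Y (psnd k) (pfst l)
   - X (psnd k) (pfst l) * Y (pfst k) (psnd l) + X (psnd k) (psnd l) * Y (pfst k) (pfst l)).

Section Wedge2Mx.
Variable R : comPzRingType.
Implicit Types X Y : 'M[R]_4.

Lemma wedge2_mxC X Y : wedge2_mx X Y = wedge2_mx Y X.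
Proof. by apply/matrixP => k l; rewrite !mxE; ring. Qed.

Lemma wedge2_mxDl X1 X2 Y :
  wedge2_mx (X1 + X2) Y = wedge2_mx X1 Y + wedge2_mx X2 Y.
Proof. by apply/matrixP => k l; rewrite !mxE; ring. Qed.

Lemma wedge2_mxDr X Y1 Y2 :
  wedge2_mx X (Y1 + Y2) = wedge2_mx X Y1 + wedge2_mx X Y2.
Proof. by rewrite wedge2_mxC wedge2_mxDl !(wedge2_mxC Y1) (wedge2_mxC Y2). Qed.

Lemma wedge2_mxZ a b X Y : wedge2_mx (a *: X) (b *: Y) = (a * b) *: wedge2_mx X Y.
Proof. by apply/matrixP => k l; rewrite !mxE; ring. Qed.

Lemma wedge2_mx0l Y : wedge2_mx 0 Y = 0.
Proof. by apply/matrixP => k l; rewrite !mxE; ring. Qed.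

Lemma wedge2_mx_hodge_skew X Y :
  wedge2_mx X Y *m hodge_mx R - (wedge2_mx X Y *m hodge_mx R)^T =
  (\tr X *: wedge2_mx Y 1%:M + \tr Y *: wedge2_mx X 1%:M
   - wedge2_mx (X *m Y + Y *m X) 1%:M - (\tr X * \tr Y - \tr (X *m Y))%:M)
  *m hodge_mx R.
Proof.
apply/matrixP => k l; rewrite !(mulmx_hodgeE, mxE) !pfstE !psndE.
elim/ord6_ind: k; elim/ord6_ind: l;
  rewrite /mxtrace !sum_ord4 !mxE !sum_ord4 /hodge_sign /=; ring.
Qed.

Lemma wedge2_mx_hodge_sym X Y :
  X *m Y = 0 -> Y *m X = 0 -> \tr X = 0 -> \tr Y = 0 ->
  (wedge2_mx X Y *m hodge_mx R)^T = wedge2_mx X Y *m hodge_mx R.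
Proof.
move=> XY0 YX0 trX0 trY0; apply/esym/eqP; rewrite -subr_eq0.
rewrite wedge2_mx_hodge_skew XY0 YX0 trX0 trY0 addr0 wedge2_mx0l mxtrace0.
by rewrite !scale0r mulr0 subrr addr0 subrr raddf0 subr0 mul0mx.
Qed.

End Wedge2Mx.

Lemma sum_kronecker_mull (R : pzSemiRingType) n (k : 'I_n) (G : 'I_n -> R) :
  \sum_i (i == k)%:R * G i = G k.
Proof.
rewrite (bigD1 k) //= eqxx mul1r big1 ?addr0 // => i /negbTE->.
by rewrite mul0r.
Qed.

Section HodgeDuality.
Variable F : fieldType.

Lemma ev_ebas (h : 'rV[F]_4) a : ev h (ebas F a) = h 0 a.
Proof.
rewrite /ev -(sum_kronecker_mull a (h 0)); apply: eq_bigr => i _.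
by rewrite /ebas mxE eqxx mulrC.
Qed.

Lemma det4_ebas (a b c d : 'I_4) :
  det4 (ebas F a) (ebas F b) (ebas F c) (ebas F d) =
  \det (\matrix_(i < 4, j < 4) (j == nth 0 [:: val a; val b; val c; val d] i :> nat)%:R).
Proof.
rewrite /det4; congr (\det _); apply/matrixP => i j; rewrite !mxE.
by case: i => [[|[|[|[|//]]]] ?]; rewrite /= mxE eqxx.
Qed.

Lemma det4_ebas_hodge k l :
  det4 (ebas F (pfst k)) (ebas F (psnd k)) (ebas F (pfst l)) (ebas F (psnd l)) =
  hodge_mx F k l.
Proof.
rewrite det4_ebas (det_mx4 (fun i j : nat =>
  (j == nth 0 [:: val (pfst k); val (psnd k); val (pfst l); val (psnd l)] i)%:R)).
rewrite !pfstE !psndE mxE.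
by elim/ord6_ind: k; elim/ord6_ind: l; rewrite /hodge_sign /=; ring.
Qed.

Lemma Psi_hodge (c : F) : Psi c = c *: hodge_mx F.
Proof.
apply/matrixP => k l; rewrite [LHS]mxE [RHS]mxE /chi22 /wedge22 -det4_ebas_hodge; congr (_ * _).
under eq_bigr => k' _ do under eq_bigr => l' _ do rewrite /ebasW !mxE eqxx -mulrA.
under eq_bigr => k' _ do rewrite -big_distrr /= sum_kronecker_mull.
exact: sum_kronecker_mull.
Qed.

Lemma invmx_Psi (c : F) : c != 0 -> invmx (Psi c) = c^-1 *: hodge_mx F.
Proof.
move=> c_neq0; have [hodge_unit _] := mulmx1_unit (hodge_mxK F).
rewrite Psi_hodge invmxZ ?unitmxZ ?unitfE //; congr (_ *: _).
by rewrite -[invmx _]mulmx1 -(hodge_mxK F) mulmxA mulVmx ?mul1mx.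
Qed.

Lemma phi_hodge (c : F) h1 h2 :
  c != 0 -> phi c h1 h2 = c^-1 *: ((hval h1 h2)^T *m hodge_mx F).
Proof.
by move=> c_neq0; rewrite /phi invmx_Psi // -scalemxAl linearZ /= trmx_mul hodge_mx_tr.
Qed.

End HodgeDuality.

Section RankOne.
Variable F : fieldType.

Lemma tensorE (u h : 'rV[F]_4) i j : tensor u h i j = u 0 i * h 0 j.
Proof. by rewrite !mxE big_ord1 !mxE. Qed.

Lemma mul_tensor (u h u' h' : 'rV[F]_4) :
  tensor u h *m tensor u' h' = ev h u' *: tensor u h'.
Proof.
apply/matrixP => i j; rewrite mxE [RHS]mxE tensorE /ev mulr_suml.
by apply: eq_bigr => t _; rewrite !tensorE; ring.
Qed.

Lemma mxtrace_tensor (u h : 'rV[F]_4) : \tr (tensor u h) = ev h u.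
Proof. by apply: eq_bigr => i _; rewrite tensorE mulrC. Qed.

Lemma wedge2_mx_tensor (u h u' h' : 'rV[F]_4) :
  wedge2_mx (tensor u h) (tensor u' h') = (wedge2 u u')^T *m (hval h h')^T.
Proof.
by apply/matrixP => k l; rewrite [LHS]mxE !tensorE mxE big_ord1 !mxE !ev_ebas; ring.
Qed.

Definition rank1_proj (v h : 'rV[F]_4) : 'M[F]_4 := (ev h v)^-1 *: tensor v h.

Lemma rank1_projM_eq0 (v h v' h' : 'rV[F]_4) :
  ev h v' = 0 -> rank1_proj v h *m rank1_proj v' h' = 0.
Proof.
move=> hv'0; rewrite /rank1_proj -scalemxAl -scalemxAr mul_tensor hv'0.
by rewrite scale0r !scaler0.
Qed.

Lemma mxtrace_rank1_proj (v h : 'rV[F]_4) : ev h v != 0 -> \tr (rank1_proj v h) = 1.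
Proof. by move=> hv_neq0; rewrite mxtraceZ mxtrace_tensor mulVf. Qed.

End RankOne.

Lemma sum_sym_diag (V : zmodType) m (f : 'I_m -> 'I_m -> V) :
  (forall k l, f k l = f l k) -> (forall x : V, x + x = 0) ->
  \sum_k \sum_l f k l = \sum_k f k k.
Proof.
move=> fC x2_eq0.
have split_row k : \sum_l f k l =
    f k k + \sum_(l : 'I_m | (k < l)%N) f k l + \sum_(l : 'I_m | (l < k)%N) f k l.
  rewrite (bigD1 k) //= -addrA (bigID (fun l : 'I_m => (k < l)%N)) /=.
  by congr (_ + (_ + _)); apply: eq_bigl => l;
    rewrite -val_eqE /=; case: ltngtP.
under eq_bigr => k _ do rewrite split_row.
rewrite !big_split /= [X in _ + _ + X](exchange_big_dep xpredT) //=.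
under [X in _ + _ + X]eq_bigr => l _ do under eq_bigr => k _ do rewrite fC.
by rewrite -addrA x2_eq0 addr0.
Qed.

Section QuadraticForms.
Variables (R : comNzRingType) (n : nat).

Definition qform (C : 'M[R]_n) : {mpoly R[n]} :=
  \sum_k \sum_l C k l *: ('X_k * 'X_l).

Lemma qformD (C D : 'M[R]_n) : qform (C + D) = qform C + qform D.
Proof.
rewrite /qform -big_split; apply: eq_bigr => k _; rewrite -big_split.
by apply: eq_bigr => l _; rewrite mxE scalerDl.
Qed.

Lemma qformZ a (C : 'M[R]_n) : qform (a *: C) = a *: qform C.
Proof.
rewrite /qform scaler_sumr; apply: eq_bigr => k _; rewrite scaler_sumr.
by apply: eq_bigr => l _; rewrite mxE scalerA.
Qed.

Lemma qform_sym_pchar2 (C : 'M[R]_n) :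
  2%N \in [pchar R] -> C^T = C -> qform C = \sum_k C k k *: 'X_k ^+ 2.
Proof.
move=> char2 symC; rewrite /qform sum_sym_diag => [|k l|p].
- by apply: eq_bigr => k _; rewrite expr2.
- by rewrite -[in LHS]symC mxE mulrC.
- by rewrite -mulr2n -scaler_nat (pcharf0 char2) scale0r.
Qed.

End QuadraticForms.

Lemma lin_mul (F : fieldType) (a b : 'rV[F]_6) : lin a * lin b = qform (a^T *m b).
Proof.
rewrite /lin /qform mulr_suml; apply: eq_bigr => k _; rewrite mulr_sumr.
by apply: eq_bigr => l _; rewrite -scalerAl -scalerAr scalerA !mxE big_ord1 !mxE.
Qed.

Lemma lin_ebasW (F : fieldType) k : lin (ebasW F k) = 'X_k.
Proof.
rewrite /lin (bigD1 k) //= big1 ?addr0 => [|i /negbTE i_neq_k].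
  by rewrite mxE !eqxx scale1r.
by rewrite mxE i_neq_k scale0r.
Qed.

Lemma inW2_diag (F : fieldType) (a : 'I_6 -> F) : inW2 (\sum_k a k *: 'X_k ^+ 2).
Proof.
exists [seq (a k, ebasW F k) | k <- index_enum 'I_6]; rewrite big_map.
by apply: eq_bigr => k _; rewrite lin_ebasW.
Qed.

Lemma ell_qform (F : fieldType) (c : F) (v h v' h' : 'rV[F]_4) : c != 0 ->
  ell c v h v' h' =
  qform (c^-1 *: (wedge2_mx (rank1_proj v h) (rank1_proj v' h') *m hodge_mx F)).
Proof.
move=> c_neq0; rewrite /ell /rank1_proj phi_hodge // lin_mul wedge2_mxZ.
rewrite wedge2_mx_tensor -qformZ; congr qform.
by rewrite -scalemxAr scalerA mulmxA -scalemxAl scalerA mulrC.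
Qed.

Theorem lemma3p9 (F : fieldType) (charF : 2%N \in [pchar F])
  (c : F) (hc : c != 0)
  (w x y z : 'rV[F]_4) (hU : c * det4 w x y z = 1)
  (v0 h0 v1 h1 v2 h2 v3 h3 : 'rV[F]_4)
  (nz0 : ev h0 v0 != 0) (nz1 : ev h1 v1 != 0)
  (nz2 : ev h2 v2 != 0) (nz3 : ev h3 v3 != 0)
  (a01 : adj v0 h0 v1 h1) (a12 : adj v1 h1 v2 h2)
  (a23 : adj v2 h2 v3 h3) (a30 : adj v3 h3 v0 h0)
  (d01 : tensor v0 h0 != tensor v1 h1) (d02 : tensor v0 h0 != tensor v2 h2)
  (d03 : tensor v0 h0 != tensor v3 h3) (d12 : tensor v1 h1 != tensor v2 h2)
  (d13 : tensor v1 h1 != tensor v3 h3) (d23 : tensor v2 h2 != tensor v3 h3) :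
  exists (a : {mpoly F[6]}) (e : bool),
    inW2 a /\
    ell c v0 h0 v1 h1 + ell c v1 h1 v2 h2 + ell c v2 h2 v3 h3 + ell c v3 h3 v0 h0
    = a + (if e then Uel w x y z else 0).
Proof.
case: a01 a12 a23 a30 => [h0v1 h1v0] [h1v2 h2v1] [h2v3 h3v2] [h3v0 h0v3].
set P0 := rank1_proj v0 h0; set P1 := rank1_proj v1 h1.
set P2 := rank1_proj v2 h2; set P3 := rank1_proj v3 h3.
set A := P0 + P2; set B := P1 + P3.
have AB0 : A *m B = 0 by rewrite mulmxDl !mulmxDr !rank1_projM_eq0 // !addr0.
have BA0 : B *m A = 0 by rewrite mulmxDl !mulmxDr !rank1_projM_eq0 // !addr0.
have trA0 : \tr A = 0 by rewrite mxtraceD !mxtrace_rank1_proj // -mulr2n pcharf0.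
have trB0 : \tr B = 0 by rewrite mxtraceD !mxtrace_rank1_proj // -mulr2n pcharf0.
have -> : ell c v0 h0 v1 h1 + ell c v1 h1 v2 h2 + ell c v2 h2 v3 h3 + ell c v3 h3 v0 h0
    = qform (c^-1 *: (wedge2_mx A B *m hodge_mx F)).
  rewrite !ell_qform // -!qformD -!scalerDr -!mulmxDl wedge2_mxDl !wedge2_mxDr.
  rewrite [wedge2_mx P0 P3]wedge2_mxC [wedge2_mx P2 P1]wedge2_mxC.
  by congr (qform (_ *: (_ *m _))); rewrite [RHS]addrAC addrA.
rewrite qform_sym_pchar2 //; last by rewrite linearZ /= wedge2_mx_hodge_sym.
eexists; exists false; split; last by rewrite addr0.
exact: inW2_diag.
Qed.
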